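(* If $A$ is a uniform Kan complex, then the canonical map $p:A^{\mathrm{I}}\to A\times A$ admits the structure of a uniform Kan fibration.
   Context: Let $\mathbb{B}$ be the category of finite sets $[n]=\{\bot,x_1,\dots,x_n,\top\}$ ($n\ge0$, $\bot\ne\top$) and functions preserving $\bot,\top$; cartesian cubical sets are presheaves on $\mathbb{B}^{op}$. $\mathrm{I}^n$ is the representable on $[n]$, $\mathrm{I}^n\cong\mathrm{I}\times\dots\times\mathrm{I}$, $\mathrm{I}=\mathrm{I}^1$; the two maps $[1]\to[0]$ give endpoints $0,1:1\to\mathrm{I}$, and $p:A^{\mathrm{I}}\to A^{\partial\mathrm{I}}\cong A\times A$ is induced by the copairing $\partial\mathrm{I}=1+1\to\mathrm{I}$. For $1\le i\le n$, $d\in\{0,1\}$, the face $\alpha_i^d:\mathrm{I}^{n-1}\to\mathrm{I}^n$ inserts $d$ in coordinate $i$; for $e\in\{0,1\}$ the open box $\sqcup^n_e\rightarrowtail\mathrm{I}^n$ is the union of the images of all faces $\alpha_i^d$ with $(i,d)\ne(1,e)$, with inclusion $i^n_e$. A uniform Kan fibration structure on $f:Y\to X$ consists of, for each $n\ge1$, $e\in\{0,1\}$, $k\ge1$ and each commutative square $b:\mathrm{I}^k\times\sqcup^n_e\to Y$, $a:\mathrm{I}^k\times\mathrm{I}^n\to X$ with $fb=a(1\times i^n_e)$, a chosen filler $\phi(a,b):\mathrm{I}^k\times\mathrm{I}^n\to Y$ with $\phi(a,b)(1\times i^n_e)=b$ and $f\phi(a,b)=a$, such that $\phi(a,b)\circ(\alpha\times1)=\phi(a(\alpha\times1),b(\alpha\times1))$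 for all $\alpha:\mathrm{I}^j\to\mathrm{I}^k$ ($j\ge1$). A uniform Kan complex is a cubical set $A$ with a uniform Kan fibration structure on $A\to1$. *)

(* cartesian cubical sets as presheaves on B^op,
   i.e. covariant functors B -> Type, where B is the category of bipointed
   finite sets [n] = {bot, x_1..x_n, top}. *)
From Stdlib Require Import FunctionalExtensionality ProofIrrelevance.
From mathcomp Require Import all_boot.

Set Implicit Arguments.
Unset Strict Implicit.
Unset Printing Implicit Defensive.

(* Points of [n]: inl false = bot, inl true = top, inr i = x_(i+1). *)
Definition bpt (n : nat) : finType := (bool + 'I_n)%type.

(* A morphism [m] -> [n] preserving bot and top is determined by the images
   of x_1..x_m. *)
Definition Bmor (m n : nat) : finType := {ffun 'I_m -> bpt n}.

Definition bext m n (f : Bmor m n) (x : bpt m) : bpt n :=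
  match x with inl b => inl b | inr i => f i end.

Definition Bid (n : nat) : Bmor n n := [ffun i => inr i].

Definition Bcomp m n p (g : Bmor n p) (f : Bmor m n) : Bmor m p :=
  [ffun i => bext g (f i)].

Lemma Bcomp_id_l m n (f : Bmor m n) : Bcomp (Bid n) f = f.
Proof. by apply/ffunP=> i; rewrite !ffunE; case: (f i) => //= j; rewrite ffunE. Qed.

Lemma Bcomp_id_r m n (f : Bmor m n) : Bcomp f (Bid m) = f.
Proof. by apply/ffunP=> i; rewrite !ffunE. Qed.

Lemma Bcomp_assoc m n p q (h : Bmor p q) (g : Bmor n p) (f : Bmor m n) :
  Bcomp h (Bcomp g f) = Bcomp (Bcomp h g) f.
Proof.
apply/ffunP=> i; rewrite !ffunE; case: (f i) => //= j; by rewrite !ffunE.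
Qed.

Record cset := CSet {
  cobj :> nat -> Type;
  cact : forall m n, Bmor m n -> cobj m -> cobj n;
  cact_id : forall n (x : cobj n), cact (Bid n) x = x;
  cact_comp : forall m n p (g : Bmor n p) (f : Bmor m n) (x : cobj m),
      cact (Bcomp g f) x = cact g (cact f x)
}.
Arguments cact {c m n}.

Record hom (X Y : cset) := Hom {
  happ :> forall n, X n -> Y n;
  hnat : forall m n (f : Bmor m n) (x : X m),
      happ (cact f x) = cact f (happ x)
}.
Arguments happ {X Y} h n x.

Definition heq (X Y : cset) (F G : hom X Y) : Prop :=
  forall n (x : X n), happ F n x = happ G n x.

Lemma hom_ext (X Y : cset) (F G : hom X Y) : heq F G -> F = G.
Proof.
case: F G => [F HF] [G HG] /= H.
have E : F = G.
  by apply: functional_extensionality_dep => n;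
     apply: functional_extensionality => x; apply: H.
subst G; f_equal; apply: proof_irrelevance.
Qed.

Definition hcomp (X Y Z : cset) (G : hom Y Z) (F : hom X Y) : hom X Z.
Proof.
refine (@Hom X Z (fun n x => happ G n (happ F n x)) _).
by move=> m n f x; rewrite !hnat.
Defined.

Definition hid (X : cset) : hom X X.
Proof. by refine (@Hom X X (fun n x => x) _). Defined.

(* representable I^n = Hom_B([n], -) *)
Definition yon (n : nat) : cset.
Proof.
refine (@CSet (fun m => Bmor n m) (fun m m' f c => Bcomp f c) _ _).
- by move=> m c; apply: Bcomp_id_l.
- by move=> m m' p g f c; rewrite Bcomp_assoc.
Defined.

Definition one : cset.
Proof. by refine (@CSet (fun _ => unit) (fun _ _ _ x => x) _ _). Defined.

Definition to_one (X : cset) : hom X one.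
Proof. by refine (@Hom X one (fun _ _ => tt) _). Defined.

Definition cprod (X Y : cset) : cset.
Proof.
refine (@CSet (fun m => (X m * Y m)%type)
          (fun m n f xy => (cact f xy.1, cact f xy.2)) _ _).
- by move=> n [x y] /=; rewrite !cact_id.
- by move=> m n p g f [x y] /=; rewrite !cact_comp.
Defined.

Definition hpair (Z X Y : cset) (F : hom Z X) (G : hom Z Y) : hom Z (cprod X Y).
Proof.
refine (@Hom Z (cprod X Y) (fun n z => (happ F n z, happ G n z)) _).
by move=> m n f z /=; rewrite !hnat.
Defined.

Definition hfst (X Y : cset) : hom (cprod X Y) X.
Proof. by refine (@Hom (cprod X Y) X (fun n xy => xy.1) _). Defined.

Definition hsnd (X Y : cset) : hom (cprod X Y) Y.
Proof. by refine (@Hom (cprod X Y) Y (fun n xy => xy.2) _). Defined.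

Definition hprodmap (X X' Y Y' : cset) (F : hom X X') (G : hom Y Y') :
  hom (cprod X Y) (cprod X' Y') :=
  hpair (hcomp F (@hfst X Y)) (hcomp G (@hsnd X Y)).

(* the interval I = I^1 and its endpoints 0,1 : 1 -> I, given by the two
   maps [1] -> [0] (x_1 |-> bot, resp. x_1 |-> top). *)
Definition cI : cset := yon 1.

Definition endpt (d : bool) : hom one cI.
Proof.
refine (@Hom one cI (fun n _ => [ffun _ => inl d]) _).
by move=> m n f x; apply/ffunP=> i; rewrite !ffunE.
Defined.

Definition yonmap m m' (f : Bmor m m') : hom (yon m') (yon m).
Proof.
refine (@Hom (yon m') (yon m) (fun p c => Bcomp c f) _).
by move=> p q g c /=; rewrite Bcomp_assoc.
Defined.

Definition cexp (E X : cset) : cset.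
Proof.
refine (@CSet (fun m => hom (cprod (yon m) E) X)
          (fun m m' f phi => hcomp phi (hprodmap (yonmap f) (hid E))) _ _).
- move=> n phi; apply: hom_ext => p [c x] /=; by rewrite Bcomp_id_r.
- move=> m n p g f phi; apply: hom_ext => q [c x] /=; by rewrite Bcomp_assoc.
Defined.

Definition cexp_pre (E E' X : cset) (u : hom E' E) : hom (cexp E X) (cexp E' X).
Proof.
refine (@Hom (cexp E X) (cexp E' X)
          (fun m phi => hcomp phi (hprodmap (hid (yon m)) u)) _).
by move=> m n f phi; apply: hom_ext => p [c x].
Defined.

(* the canonical isomorphism X^1 ~= X (Yoneda): phi |-> phi_n(id_[n], tt) *)
Definition eval_one (X : cset) : hom (cexp one X) X.
Proof.
refine (@Hom (cexp one X) X (fun n phi => happ phi n (Bid n, tt)) _).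
move=> m n f phi /=.
rewrite -(hnat phi) /=; by rewrite Bcomp_id_l Bcomp_id_r.
Defined.

(* p : A^I -> A^{dI} ~= A x A, induced by the copairing dI = 1 + 1 -> I of
   the endpoints 0 and 1. *)
Definition path_ends (A : cset) : hom (cexp cI A) (cprod A A) :=
  hpair (hcomp (eval_one A) (cexp_pre A (endpt false)))
        (hcomp (eval_one A) (cexp_pre A (endpt true))).

(* The face alpha_i^d : I^n -> I^(n+1) (inserting d in coordinate i,
   0-indexed here) corresponds by Yoneda to the B-map [n+1] -> [n]
   sending x_i to d and the other x_j to the remaining coordinates in order. *)
Definition sface n (i : 'I_n.+1) (d : bool) : Bmor n.+1 n :=
  [ffun j => if unlift i j is Some j' then inr j' else inl d].

Definition face n (i : 'I_n.+1) (d : bool) : hom (yon n) (yon n.+1) :=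
  yonmap (sface i d).

(* c in I^(n+1)(m) lies in the open box sqcup^(n+1)_e iff it is in the image
   of some face alpha_i^d with (i,d) <> (first coordinate, e). *)
Definition in_obox n (e : bool) m (c : Bmor n.+1 m) : bool :=
  [exists i : 'I_n.+1, exists d : bool,
     ((i, d) != (ord0, e)) && [exists c' : Bmor n m, c == happ (face i d) m c']].

Lemma in_obox_act n e m m' (f : Bmor m m') (c : Bmor n.+1 m) :
  in_obox e c -> in_obox e (Bcomp f c).
Proof.
case/existsP=> i /existsP [d /andP [Hid /existsP [c' /eqP Hc]]].
apply/existsP; exists i; apply/existsP; exists d; rewrite Hid /=.
apply/existsP; exists (Bcomp f c'); apply/eqP => /=.
by rewrite Hc /= Bcomp_assoc.
Qed.

Definition obox (n : nat) (e : bool) : cset.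
Proof.
refine (@CSet (fun m => {c : Bmor n.+1 m | in_obox e c})
          (fun m m' f c => exist _ (Bcomp f (sval c)) (in_obox_act f (svalP c)))
          _ _).
- by move=> m [c Hc]; apply: val_inj; rewrite /= Bcomp_id_l.
- by move=> m m' p g f [c Hc]; apply: val_inj; rewrite /= Bcomp_assoc.
Defined.

Definition obox_incl (n : nat) (e : bool) : hom (obox n e) (yon n.+1).
Proof. by refine (@Hom (obox n e) (yon n.+1) (fun m c => sval c) _). Defined.

Definition kan_square (Y X : cset) (f : hom Y X) (n : nat) (e : bool) (k : nat)
  (a : hom (cprod (yon k.+1) (yon n.+1)) X)
  (b : hom (cprod (yon k.+1) (obox n e)) Y) : Prop :=
  heq (hcomp f b) (hcomp a (hprodmap (hid (yon k.+1)) (obox_incl n e))).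

(* A uniform Kan fibration structure on f : Y -> X (dimensions n, k, j of the
   paper are written n.+1, k.+1, j.+1 to encode n, k, j >= 1). *)
Record ukf_struct (Y X : cset) (f : hom Y X) := UKF {
  kfill : forall n e k a b, @kan_square Y X f n e k a b ->
            hom (cprod (yon k.+1) (yon n.+1)) Y;
  kfill_box : forall n e k a b (H : @kan_square Y X f n e k a b),
      heq (hcomp (kfill H) (hprodmap (hid (yon k.+1)) (obox_incl n e))) b;
  kfill_lift : forall n e k a b (H : @kan_square Y X f n e k a b),
      heq (hcomp f (kfill H)) a;
  kfill_unif : forall n e k j (alpha : hom (yon j.+1) (yon k.+1)) a b
      (H : @kan_square Y X f n e k a b)
      (H' : @kan_square Y X f n e j
              (hcomp a (hprodmap alpha (hid (yon n.+1))))
              (hcomp b (hprodmap alpha (hid (obox n e))))),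
      heq (hcomp (kfill H) (hprodmap alpha (hid (yon n.+1)))) (kfill H')
}.

Definition ukan_complex (A : cset) : Type := ukf_struct (to_one A).

(* Transpose the path coordinate into the cube.  A lifting problem for
   p : A^I -> A x A in dimension n, parametrised by I^k, is the same as a
   Kan problem for A in dimension n+1 whose last coordinate is the path
   coordinate: the open box of I^(n+1) is the union of (open box of I^n) x I,
   where the map b to A^I supplies the values, and I^n x dI, where the
   endpoints a supply them.  Fill that box with the Kan structure of A and
   transpose back.  Uniformity in the parameter I^k survives because the
   transposition does not touch the parameter coordinates. *)
From Stdlib Require Import ProofIrrelevance.
From mathcomp Require Import all_boot.

Set Implicit Arguments.
Unset Strict Implicit.
Unset Printing Implicit Defensive.

Definition Binit n m (d : Bmor n.+1 m) : Bmor n m := [ffun j => d (lift ord_max j)].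

Definition Blast n m (d : Bmor n.+1 m) : bpt m := d ord_max.

Definition Bsnoc n m (d : Bmor n m) (t : bpt m) : Bmor n.+1 m :=
  [ffun i => if unlift ord_max i is Some j then d j else t].

Lemma Binit_snoc n m (d : Bmor n m) t : Binit (Bsnoc d t) = d.
Proof. by apply/ffunP=> j; rewrite !ffunE liftK. Qed.

Lemma Blast_snoc n m (d : Bmor n m) t : Blast (Bsnoc d t) = t.
Proof. by rewrite /Blast ffunE unlift_none. Qed.

Lemma Binit_comp n m p (f : Bmor m p) (d : Bmor n.+1 m) :
  Binit (Bcomp f d) = Bcomp f (Binit d).
Proof. by apply/ffunP=> j; rewrite !ffunE. Qed.

Lemma Blast_comp n m p (f : Bmor m p) (d : Bmor n.+1 m) :
  Blast (Bcomp f d) = bext f (Blast d).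
Proof. by rewrite /Blast ffunE. Qed.

Lemma Bcomp_snoc n m p (f : Bmor m p) (d : Bmor n m) t :
  Bcomp f (Bsnoc d t) = Bsnoc (Bcomp f d) (bext f t).
Proof. by apply/ffunP=> i; rewrite !ffunE; case: unlift => [j|]; rewrite ?ffunE. Qed.

Lemma in_oboxE n e m (d : Bmor n.+1 m) :
  in_obox e d =
  [exists i : 'I_n.+1, exists dd : bool, ((i, dd) != (ord0, e)) && (d i == inl dd)].
Proof.
apply/idP/idP.
- case/existsP=> i /existsP [dd /andP [Hid /existsP [c' /eqP ->]]].
  apply/existsP; exists i; apply/existsP; exists dd.
  by rewrite Hid /= !ffunE unlift_none.
- case/existsP=> i /existsP [dd /andP [Hid /eqP Hd]].
  apply/existsP; exists i; apply/existsP; exists dd; rewrite Hid /=.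
  apply/existsP; exists [ffun j => d (lift i j)]; apply/eqP/ffunP=> j /=.
  by rewrite !ffunE; case: unliftP => [j' ->|->] /=; rewrite ?ffunE.
Qed.

Lemma lift_max_eq0 n (i : 'I_n.+1) :
  (lift ord_max i == ord0 :> 'I_n.+2) = (i == ord0).
Proof. by rewrite -!val_eqE /= /bump leqNgt ltnS (leq_ord i) add0n. Qed.

Lemma in_obox_snoc n e m (d : Bmor n.+1 m) t :
  in_obox e d -> in_obox e (Bsnoc d t).
Proof.
rewrite !in_oboxE => /existsP [i /existsP [dd /andP [Hid /eqP Hd]]].
apply/existsP; exists (lift ord_max i); apply/existsP; exists dd.
by rewrite ffunE liftK Hd eqxx andbT; move: Hid; rewrite !xpair_eqE lift_max_eq0.
Qed.

Lemma in_obox_snoc_endpt n e m (d : Bmor n.+1 m) b : in_obox e (Bsnoc d (inl b)).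
Proof.
rewrite in_oboxE; apply/existsP; exists ord_max; apply/existsP; exists b.
by rewrite ffunE unlift_none eqxx andbT xpair_eqE -val_eqE.
Qed.

Lemma in_obox_split n e m (d : Bmor n.+2 m) :
  in_obox e d -> (exists b, Blast d = inl b) \/ in_obox e (Binit d).
Proof.
rewrite in_oboxE => /existsP [I /existsP [dd /andP [Hid /eqP Hd]]].
case: (unliftP ord_max I) Hd Hid => [i ->|->] Hd Hid; last by left; exists dd.
right; rewrite in_oboxE; apply/existsP; exists i; apply/existsP; exists dd.
by rewrite ffunE Hd eqxx andbT; move: Hid; rewrite !xpair_eqE lift_max_eq0.
Qed.

Lemma kan_square_to_one (Y : cset) n e k a b : kan_square (to_one Y) (n:=n) (e:=e) (k:=k) a b.
Proof. by move=> m x /=; case: (happ a m _). Qed.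

Lemma kfill_congr (Y X : cset) (f : hom Y X) (u : ukf_struct f) n e k a1 a2 b1 b2
    (H1 : kan_square f (n:=n) (e:=e) (k:=k) a1 b1)
    (H2 : kan_square f (n:=n) (e:=e) (k:=k) a2 b2) :
  a1 = a2 -> b1 = b2 -> kfill u H1 = kfill u H2.
Proof. by move=> E1 E2; subst; f_equal; apply: proof_irrelevance. Qed.

Section TransposedBox.

Variables (A : cset) (n : nat) (e : bool) (k : nat).
Variable a : hom (cprod (yon k.+1) (yon n.+1)) (cprod A A).
Variable b : hom (cprod (yon k.+1) (obox n e)) (cexp cI A).
Hypothesis Hab : kan_square (path_ends A) a b.

Definition square_end (bb : bool) m (c : Bmor k.+1 m) (d : Bmor n.+1 m) : A m :=
  (if bb then snd else fst) (happ a m (c, d)).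

Definition box_path m (c : Bmor k.+1 m) (x : obox n e m) (t : bpt m) : A m :=
  happ (happ b m (c, x)) m ((Bid m, [ffun _ => t]) : cprod (yon m) cI m).

(* The [None] branch is never taken: by [in_obox_split], a point of the box
   whose last coordinate is not an endpoint has its other coordinates in the
   smaller box. *)
Definition tbox_fun m (cd : cprod (yon k.+1) (obox n.+1 e) m) : A m :=
  let c := cd.1 in let d := sval cd.2 in
  match Blast d with
  | inl bb => square_end bb c (Binit d)
  | inr _ => match (insub (Binit d) : option (obox n e m)) with
             | Some x => box_path c x (Blast d)
             | None => square_end false c (Binit d)
             end
  end.

Lemma box_path_endpt m c (x : obox n e m) bb :
  box_path c x (inl bb) = square_end bb c (sval x).
Proof. by have := Hab (c, x); rewrite /= /square_end /box_path => <-; case: bb. Qed.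

Lemma tbox_fun_endpt m (cd : cprod (yon k.+1) (obox n.+1 e) m) bb :
  Blast (sval cd.2) = inl bb -> tbox_fun cd = square_end bb cd.1 (Binit (sval cd.2)).
Proof. by rewrite /tbox_fun /= => ->. Qed.

Lemma tbox_fun_path m (cd : cprod (yon k.+1) (obox n.+1 e) m) (x : obox n e m) :
  sval x = Binit (sval cd.2) -> tbox_fun cd = box_path cd.1 x (Blast (sval cd.2)).
Proof.
move=> Hx; rewrite /tbox_fun /=.
case: (Blast _) => [bb|j]; first by rewrite box_path_endpt Hx.
case: insubP => [y _ Hy|]; first by congr box_path; apply: val_inj; rewrite /= Hy.
by rewrite -Hx (svalP x).
Qed.

Lemma square_end_nat bb m m' (f : Bmor m m') c d :
  square_end bb (Bcomp f c) (Bcomp f d) = cact f (square_end bb c d).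
Proof. by rewrite /square_end (hnat a f (c, d)); case: bb. Qed.

Lemma box_path_nat m m' (f : Bmor m m') c (x : obox n e m) t :
  box_path (Bcomp f c) (cact f x) (bext f t) = cact f (box_path c x t).
Proof.
rewrite /box_path (hnat b f (c, x)) -(hnat (happ b m (c, x))) /=.
rewrite Bcomp_id_l Bcomp_id_r; congr happ; congr pair.
by apply/ffunP=> i; rewrite !ffunE.
Qed.

Definition tbox : hom (cprod (yon k.+1) (obox n.+1 e)) A.
Proof.
refine (@Hom _ A tbox_fun _) => m m' f [c [d Hd]] /=.
case: (in_obox_split Hd) => [[bb Hb]|Hi].
  rewrite (@tbox_fun_endpt _ _ bb) /=; last by rewrite Blast_comp Hb.
  by rewrite (@tbox_fun_endpt _ _ bb) //= Binit_comp square_end_nat.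
pose x : obox n e m := exist _ (Binit d) Hi.
rewrite (@tbox_fun_path _ _ x) // (@tbox_fun_path _ _ (cact f x)) /=;
  last by rewrite Binit_comp.
by rewrite Blast_comp; exact: (box_path_nat f c x (Blast d)).
Defined.

End TransposedBox.

Section CurryLast.

Variables (A : cset) (n k : nat).
Variable F : hom (cprod (yon k.+1) (yon n.+2)) A.

Definition curry_last_at m (c : Bmor k.+1 m) (d : Bmor n.+1 m) :
  hom (cprod (yon m) cI) A.
Proof.
refine (@Hom (cprod (yon m) cI) A
  (fun p gt => happ F p ((Bcomp gt.1 c, Bsnoc (Bcomp gt.1 d) (gt.2 ord0))
                          : cprod (yon k.+1) (yon n.+2) p)) _).
by move=> p q f [g t] /=; rewrite -(hnat F f) /= Bcomp_snoc !Bcomp_assoc ffunE.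
Defined.

Definition curry_last : hom (cprod (yon k.+1) (yon n.+1)) (cexp cI A).
Proof.
refine (@Hom (cprod (yon k.+1) (yon n.+1)) (cexp cI A)
  (fun m cd => curry_last_at cd.1 cd.2) _).
by move=> m m' f [c d]; apply: hom_ext => p [g t] /=; rewrite !Bcomp_assoc.
Defined.

End CurryLast.

Section PathFill.

Variables (A : cset) (HA : ukan_complex A).

Definition path_fill n e k a b (Hab : kan_square (path_ends A) (n:=n) (e:=e) (k:=k) a b) :
  hom (cprod (yon k.+1) (yon n.+1)) (cexp cI A) :=
  curry_last (kfill HA (kan_square_to_one (to_one _) (tbox Hab))).

Lemma path_fill_box n e k a b (Hab : kan_square (path_ends A) (n:=n) (e:=e) (k:=k) a b) :
  heq (hcomp (path_fill Hab) (hprodmap (hid (yon k.+1)) (obox_incl n e))) b.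
Proof.
move=> m [c x]; apply: hom_ext => p [g t] /=.
pose y : obox n.+1 e p := exist (fun z : Bmor n.+2 p => in_obox e z) _
  (in_obox_snoc (t ord0) (in_obox_act g (svalP x))).
have := kfill_box HA (kan_square_to_one (to_one _) (tbox Hab)) (Bcomp g c, y).
rewrite /= => ->; rewrite (@tbox_fun_path _ _ _ _ _ _ Hab _ _ (cact g x));
  last by rewrite /= Binit_snoc.
rewrite Blast_snoc /box_path (hnat b g (c, x)) /= Bcomp_id_l.
by congr happ; congr pair; apply/ffunP=> i; rewrite ffunE (ord1 i).
Qed.

Lemma path_fill_lift n e k a b (Hab : kan_square (path_ends A) (n:=n) (e:=e) (k:=k) a b) :
  heq (hcomp (path_ends A) (path_fill Hab)) a.
Proof.
move=> m [c d] /=; rewrite !ffunE !Bcomp_id_l.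
have Hend bb := kfill_box HA (kan_square_to_one (to_one _) (tbox Hab))
  (c, exist (fun z : Bmor n.+2 m => in_obox e z) _ (in_obox_snoc_endpt e d bb)).
rewrite /= in Hend; rewrite !Hend.
by rewrite /tbox_fun /= !Blast_snoc !Binit_snoc /square_end -surjective_pairing.
Qed.

Lemma path_fill_unif n e k j (alpha : hom (yon j.+1) (yon k.+1)) a b
    (Hab : kan_square (path_ends A) (n:=n) (e:=e) (k:=k) a b)
    (Hab' : kan_square (path_ends A) (n:=n) (e:=e) (k:=j)
              (hcomp a (hprodmap alpha (hid (yon n.+1))))
              (hcomp b (hprodmap alpha (hid (obox n e))))) :
  heq (hcomp (path_fill Hab) (hprodmap alpha (hid (yon n.+1)))) (path_fill Hab').
Proof.
move=> m [c d]; apply: hom_ext => p [g t] /=.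
have := hnat alpha g c; rewrite /= => <-.
pose Hsq := kan_square_to_one (hcomp (to_one _) (hprodmap alpha (hid (yon n.+2))))
  (hcomp (tbox Hab) (hprodmap alpha (hid (obox n.+1 e)))).
have := kfill_unif HA _ Hsq (Bcomp g c, Bsnoc (Bcomp g d) (t ord0)).
rewrite /= => ->.
by rewrite (kfill_congr HA Hsq (kan_square_to_one (to_one _) (tbox Hab'))) //;
  apply: hom_ext.
Qed.

End PathFill.

Theorem lemma3p5 (A : cset) (HA : ukan_complex A) : ukf_struct (path_ends A).
Proof.
exact: (UKF (path_fill_box HA) (path_fill_lift HA) (path_fill_unif HA)).
Qed.
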